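(* For $\varepsilon \in [0,1]$, let $F_{\varepsilon}^c$ denote the problem: minimize $\|\bm d\|_1 = \sum_{i \in \mathcal D} d_i$ over all $(\bm\theta, \bm p, \bm d) \in \mathcal X_{\mathrm{DC}}$ satisfying $\left(1-\varepsilon + \varepsilon\sqrt{|\mathcal D|}\right)\|\bm d\|_2 \leqslant \|\bm d\|_1$, with optimal load-shed vector $\bm z^*(F_{\varepsilon}^c)$. Let $\bm v^*$ be an optimal load-shed vector of the minimum load shedding problem $\min\{\|\bm d\|_1 : (\bm\theta,\bm p,\bm d) \in \mathcal X_{\mathrm{DC}}\}$, and assume $\|\bm v^*\|_1 > 0$. Define the price of fairness $$\mathrm{POF}(F_{\varepsilon}^c) = \frac{\|\bm z^*(F_{\varepsilon}^c)\|_1 - \|\bm v^*\|_1}{\|\bm v^*\|_1}.$$ Then $\mathrm{POF}(F_{\varepsilon}^c)$ is an increasing (non-decreasing) function of $\varepsilon$ on the feasibility domain, i.e., the set of $\varepsilon \in [0,1]$ for which $F_{\varepsilon}^c$ is feasible.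
   Context: A damaged power network has undamaged lines $\mathcal L$, buses $\mathcal B$, generators $\mathcal G$ and loads $\mathcal D$. Decision variables: phase angles $\theta_b$ ($b \in \mathcal B$), generation $p_g$ ($g \in \mathcal G$), and load shed $d_i$ ($i \in \mathcal D$). Parameters: thermal limits $p_{ij}^{\max}$ and susceptances $b_{ij}$ for $(i,j) \in \mathcal L$, generation limits $p_g^{\min}, p_g^{\max}$, and active demands $d_i^{\max}$. The feasible set $\mathcal X_{\mathrm{DC}}$ consists of all $(\bm\theta,\bm p,\bm d)$ with $\sum_{g \in \mathcal G} p_g = \sum_{i \in \mathcal D}(d_i^{\max} - d_i)$, $p_g \in [p_g^{\min}, p_g^{\max}]$ for all $g$, $d_i \in [0, d_i^{\max}]$ for all $i$, and $-p_{ij}^{\max} \leqslant b_{ij}(\theta_i - \theta_j) \leqslant p_{ij}^{\max}$ for all $(i,j) \in \mathcal L$. Here $\|\cdot\|_1$ and $\|\cdot\|_2$ are the usual $\ell^1$ and $\ell^2$ norms. *)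

From mathcomp Require Import all_boot all_order all_algebra.
Set Implicit Arguments. Unset Strict Implicit. Unset Printing Implicit Defensive.
Import Order.TTheory GRing.Theory Num.Theory.
Local Open Scope ring_scope.

(* Data of a damaged DC power network: buses B, generators G, loads D and
   undamaged lines L (each line l goes from bus [lfrom l] to bus [lto l]). *)
Record network (R : rcfType) (B G D L : finType) := Network {
  lfrom : L -> B;
  lto   : L -> B;
  susc  : L -> R;
  pflow_max : L -> R;
  pg_min : G -> R;
  pg_max : G -> R;
  dmax   : D -> R
}.

Section Defs.
Variables (R : rcfType) (B G D L : finType) (N : network R B G D L).

Definition X_DC (theta : B -> R) (p : G -> R) (d : D -> R) : Prop :=
  [/\ \sum_(g : G) p g = \sum_(i : D) (dmax N i - d i),
      (forall g, pg_min N g <= p g <= pg_max N g),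
      (forall i, 0 <= d i <= dmax N i) &
      (forall l, - pflow_max N l <= susc N l * (theta (lfrom N l) - theta (lto N l))
                 <= pflow_max N l)].

Definition norm1 (d : D -> R) : R := \sum_(i : D) `|d i|.
Definition norm2 (d : D -> R) : R := Num.sqrt (\sum_(i : D) d i ^+ 2).

Definition Fc_feasible (eps : R) theta p d : Prop :=
  X_DC theta p d /\
  (1 - eps + eps * Num.sqrt (#|D|%:R)) * norm2 d <= norm1 d.

Definition Fc_is_feasible (eps : R) : Prop := exists theta p d, Fc_feasible eps theta p d.

Definition Fc_optimal (eps : R) (z : D -> R) : Prop :=
  (exists theta p, Fc_feasible eps theta p z) /\
  forall theta p d, Fc_feasible eps theta p d -> norm1 z <= norm1 d.

Definition MLS_optimal (v : D -> R) : Prop :=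
  (exists theta p, X_DC theta p v) /\
  forall theta p d, X_DC theta p d -> norm1 v <= norm1 d.

Definition POF (z v : D -> R) : R := (norm1 z - norm1 v) / norm1 v.

End Defs.

(** Raising [eps] only tightens the fairness constraint, because its
    coefficient [1 - eps + eps * sqrt |D|] grows with [eps] (as [sqrt |D| >= 1]).
    So the feasible sets of [F^c_eps] shrink, the optimal load shed grows, and
    so does the price of fairness, which is an increasing affine function of it. *)
From mathcomp Require Import all_boot all_order all_algebra ring.
Import Order.TTheory GRing.Theory Num.Theory.
Local Open Scope ring_scope.

Lemma fairness_coef_le (R : realDomainType) (s eps1 eps2 : R) :
  1 <= s -> eps1 <= eps2 -> 1 - eps1 + eps1 * s <= 1 - eps2 + eps2 * s.
Proof.
move=> s_ge1 le_eps.
have -> : 1 - eps2 + eps2 * s = 1 - eps1 + eps1 * s + (eps2 - eps1) * (s - 1).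
  by ring.
by rewrite lerDl mulr_ge0 // subr_ge0.
Qed.

Section FairLoadShedding.
Set Implicit Arguments.
Unset Strict Implicit.
Variables (R : rcfType) (B G D L : finType) (N : network R B G D L).

Lemma norm2_card0 (d : D -> R) : #|D| = 0%N -> norm2 d = 0.
Proof. by move=> /card0_eq D0; rewrite /norm2 big_pred0 ?sqrtr0. Qed.

Lemma sqrt_card_ge1 : (0 < #|D|)%N -> 1 <= Num.sqrt (#|D|%:R : R).
Proof. by move=> D_gt0; rewrite -[leLHS]sqrtr1 ler_sqrt // ler1n. Qed.

Lemma Fc_feasible_le (eps1 eps2 : R) theta p d :
  eps1 <= eps2 -> Fc_feasible N eps2 theta p d -> Fc_feasible N eps1 theta p d.
Proof.
move=> le_eps [X fair]; split=> //; apply: le_trans fair.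
have [D0 | D_gt0] := posnP #|D|; first by rewrite !norm2_card0 // !mulr0.
by rewrite ler_wpM2r ?sqrtr_ge0 // fairness_coef_le ?sqrt_card_ge1.
Qed.

Lemma Fc_optimal_le (eps1 eps2 : R) (z1 z2 : D -> R) :
  eps1 <= eps2 -> Fc_optimal N eps1 z1 -> Fc_optimal N eps2 z2 ->
  norm1 z1 <= norm1 z2.
Proof.
move=> le_eps [_ opt1] [[theta [p feas2]] _].
exact: opt1 _ _ _ (Fc_feasible_le le_eps feas2).
Qed.

Lemma POF_le (z1 z2 v : D -> R) :
  0 < norm1 v -> norm1 z1 <= norm1 z2 -> POF z1 v <= POF z2 v.
Proof. by move=> v_gt0 le_z; rewrite /POF ler_pM2r ?invr_gt0 // lerD2r. Qed.

End FairLoadShedding.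

Theorem corollary1 (R : rcfType) (B G D L : finType) (N : network R B G D L)
    (v : D -> R) (hv : MLS_optimal N v) (hv0 : 0 < norm1 v)
    (eps1 eps2 : R) (z1 z2 : D -> R) :
  0 <= eps1 -> eps1 <= eps2 -> eps2 <= 1 ->
  Fc_is_feasible N eps1 -> Fc_is_feasible N eps2 ->
  Fc_optimal N eps1 z1 -> Fc_optimal N eps2 z2 ->
  POF z1 v <= POF z2 v.
Proof.
move=> _ le_eps _ _ _ opt1 opt2.
exact/POF_le/(Fc_optimal_le le_eps opt1 opt2).
Qed.
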